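(* Let $X$ be a semigroup. If all idempotents of the semigroup $\beta(X)$ commute, then every cyclic subsemigroup of $X$ and every linear subsemigroup of $X$ is finite.
   Context: $\beta(X)$ is the set of all ultrafilters on $X$, with each $x\in X$ identified with the principal ultrafilter $\langle x\rangle=\{A\subset X:x\in A\}$, endowed with the operation $\mathcal A*\mathcal B=\big\langle \bigcup_{a\in A} a*B_a : A\in\mathcal A,\ \{B_a\}_{a\in A}\subset\mathcal B\big\rangle$, where $\langle\mathcal C\rangle=\{A\subset X:\exists C\in\mathcal C,\ C\subset A\}$ (this makes $\beta(X)$ a semigroup). A semigroup $S$ is cyclic if $S=\{x^n:n\in\mathbb N\}$ for some $x\in S$; linear if $xy\in\{x,y\}$ for all $x,y\in S$. *)

From Stdlib Require Import List.

Section BetaDefs.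
Context {X : Type} (op : X -> X -> X).

Definition associative_op : Prop :=
  forall x y z : X, op x (op y z) = op (op x y) z.

Definition finite_set (S : X -> Prop) : Prop :=
  exists l : list X, forall x, S x -> In x l.

Definition subsemigroup (S : X -> Prop) : Prop :=
  forall x y, S x -> S y -> S (op x y).

(* npow x n = x^(n+1), i.e. the positive powers x, x^2, x^3, ... *)
Fixpoint npow (x : X) (n : nat) : X :=
  match n with
  | O => x
  | S k => op (npow x k) x
  end.

Definition cyclic_set (S : X -> Prop) : Prop :=
  exists x, S x /\ forall y, S y <-> exists n, y = npow x n.

Definition linear_set (S : X -> Prop) : Prop :=
  forall x y, S x -> S y -> op x y = x \/ op x y = y.

Definition is_ultrafilter (F : (X -> Prop) -> Prop) : Prop :=
  F (fun _ => True) /\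
  ~ F (fun _ => False) /\
  (forall A B : X -> Prop, F A -> (forall x, A x -> B x) -> F B) /\
  (forall A B : X -> Prop, F A -> F B -> F (fun x => A x /\ B x)) /\
  (forall A : X -> Prop, F A \/ F (fun x => ~ A x)).

(* The operation on beta(X):
   A * B = < { U_{a in A} a*B_a : A in A, (B_a)_{a in A} in B } >. *)
Definition beta_op (F G : (X -> Prop) -> Prop) : (X -> Prop) -> Prop :=
  fun S => exists (A : X -> Prop) (Bf : X -> X -> Prop),
      F A /\ (forall a, A a -> G (Bf a)) /\
      (forall a b, A a -> Bf a b -> S (op a b)).

Definition beta_idempotent (F : (X -> Prop) -> Prop) : Prop :=
  is_ultrafilter F /\ forall S, beta_op F F S <-> F S.

Definition beta_commute (F G : (X -> Prop) -> Prop) : Prop :=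
  forall S, beta_op F G S <-> beta_op G F S.

End BetaDefs.

From Stdlib Require Import List Arith Lia.
From Stdlib Require Import Classical FunctionalExtensionality PropExtensionality.
From Stdlib Require Import IndefiniteDescription.
From mathcomp Require classical_sets filter.

(* Ultrafilters are families of subsets of X; on them the product beta_op is
   the iterated limit uprod u v = { S | u-most a, v-most b, a * b in S },
   which is associative.  A closed subset of beta(X) is described by a filter
   G (its points are the ultrafilters refining G).

   1. Ellis-Numakura: a nonempty closed subsemigroup of beta(X) contains an
      idempotent.  Zorn gives a minimal one, cl F; for p in it both
      (cl F) * p and { q in cl F | q * p = p } are closed subsemigroups of
      cl F, hence equal to it, which yields p * p = p.
   2. Cyclic case: if x has infinite order, the sets of powers x^e with 2^k | e
      and v_2(e) = i mod 2 (k in N) describe closed subsemigroups for i = 0, 1.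
      Their idempotents p0, p1 satisfy p0 * p1 on { x^e | v_2(e) even } and
      p1 * p0 on { x^e | v_2(e) odd }, so they do not commute.
   3. Linear case: an infinite linear set is a commutative band and contains an
      injective chain (f n), with f n * f m = f n for all n < m or f n * f m = f m
      for all n < m.  Ultrafilters on the tails of the even and of the odd
      terms are then idempotents u0, u1 whose commutation forces u0 = u1. *)

Lemma zorn_above (T : Type) (P : (T -> Prop) -> Prop) (A0 : T -> Prop) :
  P A0 ->
  (forall C : (T -> Prop) -> Prop, (exists A, C A) -> (forall A, C A -> P A) ->
     (forall A B, C A -> C B -> (forall x, A x -> B x) \/ (forall x, B x -> A x)) ->
     P (fun x => exists A, C A /\ A x)) ->
  exists M, P M /\ (forall x, A0 x -> M x) /\
    forall B, P B -> (forall x, M x -> B x) -> forall x, B x -> M x.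
Proof.
intros PA0 Pchain.
destruct (@classical_sets.Zorn_bigcup T (fun A => P (fun x => A x \/ A0 x)))
  as [A [PA Amax]].
- intros F FP Ftot.
  destruct (classic (exists A, F A)) as [Fne | Fempty].
  + set (C := fun B : T -> Prop => exists A, F A /\ B = (fun x => A x \/ A0 x)).
    assert (Eunion : (fun x => exists B, C B /\ B x)
                     = (fun x => classical_sets.bigcup F (fun Y => Y) x \/ A0 x)).
    { apply functional_extensionality; intros x; apply propositional_extensionality.
      destruct Fne as [A1 FA1]; split.
      - intros [B [[A [FA ->]] [Ax | A0x]]]; [left; exists A | right]; auto.
      - intros [[A FA Ax] | A0x].
        + exists (fun y => A y \/ A0 y); split; [exists A | left]; auto.
        + exists (fun y => A1 y \/ A0 y); split; [exists A1 | right]; auto. }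
    rewrite <- Eunion. apply Pchain.
    * destruct Fne as [A1 FA1]. exists (fun y => A1 y \/ A0 y), A1; auto.
    * intros B [A [FA ->]]. exact (FP A FA).
    * intros B1 B2 [A1 [FA1 ->]] [A2 [FA2 ->]].
      destruct (Ftot A1 A2 FA1 FA2) as [S12 | S21];
        [left | right]; intros x [Ax | A0x]; auto.
  + assert (Eunion : (fun x => classical_sets.bigcup F (fun Y => Y) x \/ A0 x) = A0).
    { apply functional_extensionality; intros x; apply propositional_extensionality.
      split; [intros [[A FA _] | A0x]; [exfalso; eauto | exact A0x] | now right]. }
    rewrite Eunion. exact PA0.
- exists (fun x => A x \/ A0 x). split; [exact PA | split; [now right |]].
  intros B PB AB x Bx. apply NNPP; intros nAx.
  assert (EB : (fun y => B y \/ A0 y) = B).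
  { apply functional_extensionality; intros y; apply propositional_extensionality.
    split; [intros [By | A0y]; [exact By | apply AB; now right] | now left]. }
  apply (Amax B); [| now rewrite EB].
  split; [intros y Ay; apply AB; now left |].
  intros BA. apply nAx. left. exact (BA x Bx).
Qed.

Section Ultrafilters.
Context {X : Type}.

Definition filter_base (G : (X -> Prop) -> Prop) : Prop :=
  G (fun _ => True) /\
  (forall A B : X -> Prop, G A -> (forall x, A x -> B x) -> G B) /\
  (forall A B : X -> Prop, G A -> G B -> G (fun x => A x /\ B x)).

Definition proper_filter (G : (X -> Prop) -> Prop) : Prop :=
  filter_base G /\ ~ G (fun _ => False).

Definition refines (G u : (X -> Prop) -> Prop) : Prop :=
  is_ultrafilter u /\ forall S, G S -> u S.

Section UltrafilterFacts.
Context {u : (X -> Prop) -> Prop} (Hu : is_ultrafilter u).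

Lemma uf_mono (A B : X -> Prop) : u A -> (forall x, A x -> B x) -> u B.
Proof. apply Hu. Qed.

Lemma uf_and (A B : X -> Prop) : u A -> u B -> u (fun x => A x /\ B x).
Proof. apply Hu. Qed.

Lemma uf_full (B : X -> Prop) : (forall x, B x) -> u B.
Proof. intros HB. apply (uf_mono (fun _ => True)); [apply Hu | auto]. Qed.

Lemma uf_witness (A : X -> Prop) : u A -> exists x, A x.
Proof.
intros HA. apply NNPP; intros N. apply (proj1 (proj2 Hu)).
apply (uf_mono A); [exact HA |]. intros x Ax. apply N. eauto.
Qed.

Lemma uf_compl (A : X -> Prop) : u (fun x => ~ A x) <-> ~ u A.
Proof.
split.
- intros HnA HA. destruct (uf_witness _ (uf_and _ _ HA HnA)) as [x [Ax nAx]]. auto.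
- intros HnA. destruct (proj2 (proj2 (proj2 (proj2 Hu))) A); tauto.
Qed.

End UltrafilterFacts.

Lemma uf_eq (u v : (X -> Prop) -> Prop) :
  is_ultrafilter u -> is_ultrafilter v -> (forall S, u S -> v S) -> u = v.
Proof.
intros Hu Hv E. apply functional_extensionality; intros S.
apply propositional_extensionality. split; [apply E |].
intros vS. apply NNPP; intros nuS. apply (uf_compl Hu S), E in nuS.
now apply (uf_compl Hv S) in nuS.
Qed.

Lemma ultrafilter_extension (G : (X -> Prop) -> Prop) :
  proper_filter G -> exists u, refines G u.
Proof.
intros [[GT [Gmono Gand]] Gne].
assert (PG : filter.ProperFilter G).
{ constructor; [exact Gne |].
  constructor; [exact GT | exact Gand | intros A B AB GA; exact (Gmono A B GA AB)]. }
destruct (filter.ultraFilterLemma PG) as [U [UU GU]].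
exists U. split; [| exact GU].
pose proof (@filter.ultra_proper _ _ UU) as PU.
pose proof (@filter.filter_filter _ _ PU) as FU.
split; [exact (@filter.filterT _ _ FU) |].
split; [exact (@filter.filter_not_empty _ _ PU) |].
split; [intros A B UA AB; exact (@filter.filterS _ _ FU A B AB UA) |].
split; [intros A B UA UB; exact (@filter.filterI _ _ FU A B UA UB) |].
intros A; exact (filter.in_ultra_setVsetC A UU).
Qed.

Definition principal (x : X) : (X -> Prop) -> Prop := fun A => A x.

Lemma principal_ultra (x : X) : is_ultrafilter (principal x).
Proof.
unfold principal. repeat split; auto. intros A; apply classic.
Qed.

End Ultrafilters.

Section Product.
Context {X : Type} (op : X -> X -> X).

Definition uprod (u v : (X -> Prop) -> Prop) : (X -> Prop) -> Prop :=
  fun S => u (fun a => v (fun b => S (op a b))).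

Lemma uprod_ultra (u v : (X -> Prop) -> Prop) :
  is_ultrafilter u -> is_ultrafilter v -> is_ultrafilter (uprod u v).
Proof.
intros Hu Hv. unfold uprod. repeat split.
- apply (uf_full Hu). intros a. apply (uf_full Hv). auto.
- intros H. destruct (uf_witness Hu _ H) as [a Ha].
  exact (proj1 (proj2 Hv) Ha).
- intros A B HA AB. apply (uf_mono Hu _ _ HA). intros a Ha.
  apply (uf_mono Hv _ _ Ha). auto.
- intros A B HA HB. apply (uf_mono Hu _ _ (uf_and Hu _ _ HA HB)).
  intros a [HAa HBa]. exact (uf_and Hv _ _ HAa HBa).
- intros A. destruct (proj2 (proj2 (proj2 (proj2 Hu))) (fun a => v (fun b => A (op a b))))
    as [HA | HnA]; [now left | right].
  apply (uf_mono Hu _ _ HnA). intros a Ha. now apply (uf_compl Hv).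
Qed.

Lemma beta_op_uprod (u v : (X -> Prop) -> Prop) (S : X -> Prop) :
  is_ultrafilter u -> is_ultrafilter v -> (beta_op op u v S <-> uprod u v S).
Proof.
intros Hu Hv. split.
- intros [A [Bf [HA [HB HS]]]]. apply (uf_mono Hu _ _ HA). intros a Aa.
  apply (uf_mono Hv _ _ (HB a Aa)). intros b; now apply HS.
- intros H. exists (fun a => v (fun b => S (op a b))), (fun a b => S (op a b)).
  auto.
Qed.

Lemma uprod_assoc (u v w : (X -> Prop) -> Prop) :
  associative_op op -> uprod (uprod u v) w = uprod u (uprod v w).
Proof.
intros Hassoc. unfold uprod. apply functional_extensionality; intros S.
do 3 (f_equal; apply functional_extensionality; intros ?).
now rewrite Hassoc.
Qed.

Lemma uprod_principal (x y : X) :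
  uprod (principal x) (principal y) = principal (op x y).
Proof. reflexivity. Qed.

End Product.

Section Ellis.
Context {X : Type} (op : X -> X -> X).

(* G describes a closed subsemigroup of beta(X): its closed set is nonempty
   (G is proper) and stable under the product. *)
Definition semigroup_filter (G : (X -> Prop) -> Prop) : Prop :=
  proper_filter G /\
  forall u v, refines G u -> refines G v -> refines G (uprod op u v).

(* Intersections of chains of closed subsemigroups: the union of a nonempty
   chain of semigroup filters is a semigroup filter. *)
Lemma semigroup_filter_chain (C : ((X -> Prop) -> Prop) -> Prop) :
  (exists G, C G) -> (forall G, C G -> semigroup_filter G) ->
  (forall G H, C G -> C H -> (forall S, G S -> H S) \/ (forall S, H S -> G S)) ->
  semigroup_filter (fun S => exists G, C G /\ G S).
Proof.
intros [G0 CG0] Csg Ctot.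
assert (Hrefines : forall u, refines (fun S => exists G, C G /\ G S) u ->
                   forall G, C G -> refines G u).
{ intros u [Hu Hsub] G CG. split; [exact Hu |]. intros S GS. apply Hsub; eauto. }
split; [split; [repeat split |] |].
- exists G0. split; [exact CG0 | apply (Csg G0 CG0)].
- intros A B [G [CG GA]] AB. exists G. split; [exact CG |].
  exact (proj1 (proj2 (proj1 (proj1 (Csg G CG)))) A B GA AB).
- intros A B [G [CG GA]] [H [CH HB]].
  assert (Hand : forall K, C K -> K A -> K B -> exists G, C G /\ G (fun x => A x /\ B x)).
  { intros K CK KA KB. exists K. split; [exact CK |].
    exact (proj2 (proj2 (proj1 (proj1 (Csg K CK)))) A B KA KB). }
  destruct (Ctot G H CG CH) as [GH | HG]; [apply (Hand H) | apply (Hand G)]; auto.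
- intros [G [CG GF]]. exact (proj2 (proj1 (Csg G CG)) GF).
- intros u v Hu Hv. split; [apply uprod_ultra; [apply Hu | apply Hv] |].
  intros S [G [CG GS]].
  apply (proj2 (Csg G CG)); [apply (Hrefines u) | apply (Hrefines v) |]; auto.
Qed.

Lemma maximal_semigroup_filter (F0 : (X -> Prop) -> Prop) :
  semigroup_filter F0 ->
  exists F, semigroup_filter F /\ (forall S, F0 S -> F S) /\
    forall G, semigroup_filter G -> (forall S, F S -> G S) -> forall S, G S -> F S.
Proof.
intros H0. apply zorn_above; [exact H0 |].
intros C Cne Csg Ctot. apply semigroup_filter_chain; auto.
Qed.

(* The filter of the closed set { q * p | q refines F }. *)
Definition right_image (F p : (X -> Prop) -> Prop) : (X -> Prop) -> Prop :=
  fun S => forall q, refines F q -> uprod op q p S.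

(* The filter of the closed set { q refines F | q * p = r }: it is generated
   by F together with the sets { a | p-most b satisfy a * b in S } for S in r. *)
Definition fiber (F p r : (X -> Prop) -> Prop) : (X -> Prop) -> Prop :=
  fun T => exists F1 S, F F1 /\ r S /\
    forall a, F1 a -> p (fun b => S (op a b)) -> T a.

Section Fiber.
Variables F p r : (X -> Prop) -> Prop.
Hypotheses (HF : filter_base F) (Hp : is_ultrafilter p) (Hr : is_ultrafilter r).

Lemma fiber_contains (S : X -> Prop) : F S -> fiber F p r S.
Proof.
intros FS. exists S, (fun _ => True). split; [exact FS |].
split; [now apply (uf_full Hr) | auto].
Qed.

Lemma fiber_base : filter_base (fiber F p r).
Proof.
split; [apply fiber_contains, HF | split].
- intros A B [F1 [S [FF1 [rS HS]]]] AB. exists F1, S; auto.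
- intros A B [F1 [S [FF1 [rS HS]]]] [F2 [S2 [FF2 [rS2 HS2]]]].
  exists (fun x => F1 x /\ F2 x), (fun x => S x /\ S2 x).
  split; [now apply HF | split; [now apply (uf_and Hr) |]].
  intros a [F1a F2a] Hpa. split; [apply HS | apply HS2]; auto;
    apply (uf_mono Hp _ _ Hpa); now intros b [].
Qed.

Lemma refines_fiber (q : (X -> Prop) -> Prop) :
  refines (fiber F p r) q <-> refines F q /\ uprod op q p = r.
Proof.
split.
- intros [Hq Hsub]. split; [split; [exact Hq | intros S FS; now apply Hsub, fiber_contains] |].
  symmetry. apply uf_eq; [exact Hr | now apply uprod_ultra |].
  intros S rS. apply Hsub. exists (fun _ => True), S.
  split; [apply HF | split; auto].
- intros [[Hq HqF] Eqp]. split; [exact Hq |].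
  intros T [F1 [S [FF1 [rS HS]]]].
  rewrite <- Eqp in rS. apply (uf_mono Hq _ _ (uf_and Hq _ _ (HqF F1 FF1) rS)).
  intros a []; auto.
Qed.

Lemma fiber_point :
  ~ fiber F p r (fun _ => False) -> exists q, refines F q /\ uprod op q p = r.
Proof.
intros Hne. destruct (ultrafilter_extension (fiber F p r)) as [q Hq].
- split; [exact fiber_base | exact Hne].
- exists q. now apply refines_fiber.
Qed.

End Fiber.

Section MinimalSemigroup.
Variables F p : (X -> Prop) -> Prop.
Hypotheses (HF : semigroup_filter F) (Hp : refines F p).

Let Hbase : filter_base F := proj1 (proj1 HF).
Let Hpu : is_ultrafilter p := proj1 Hp.

(* The closed set (cl F) * p is closed: its points are products q * p. *)
Lemma right_image_points (r : (X -> Prop) -> Prop) :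
  refines (right_image F p) r -> exists q, refines F q /\ uprod op q p = r.
Proof.
intros [Hr Hsub]. apply fiber_point; auto.
intros [F1 [S [FF1 [rS Hempty]]]].
assert (nS : right_image F p (fun x => ~ S x)).
{ intros q [Hq HqF]. apply (uf_mono Hq _ _ (HqF F1 FF1)). intros a F1a.
  apply (uf_compl Hpu). intros Hpa. exact (Hempty a F1a Hpa). }
apply Hsub, (uf_compl Hr) in nS. exact (nS rS).
Qed.

Lemma right_image_contains (S : X -> Prop) : F S -> right_image F p S.
Proof. intros FS q Hq. exact (proj2 (proj2 HF q p Hq Hp) S FS). Qed.

Hypothesis Hassoc : associative_op op.

Lemma right_image_semigroup : semigroup_filter (right_image F p).
Proof.
assert (Hprod : forall q, refines F q -> is_ultrafilter (uprod op q p))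
  by (intros q Hq; apply uprod_ultra; [apply Hq | exact Hpu]).
split; [split; [repeat split |] |].
- intros q Hq. apply (uf_full (Hprod q Hq)). auto.
- intros A B HA AB q Hq. exact (uf_mono (Hprod q Hq) _ _ (HA q Hq) AB).
- intros A B HA HB q Hq. exact (uf_and (Hprod q Hq) _ _ (HA q Hq) (HB q Hq)).
- intros Hempty. exact (proj1 (proj2 (Hprod p Hp)) (Hempty p Hp)).
- intros u v Hu Hv. split; [apply uprod_ultra; [apply Hu | apply Hv] |].
  destruct (right_image_points u Hu) as [q1 [Hq1 <-]].
  destruct (right_image_points v Hv) as [q2 [Hq2 <-]].
  intros S HS. rewrite <- uprod_assoc by exact Hassoc.
  apply HS. apply (proj2 HF); [apply (proj2 HF) |]; auto.
Qed.

Lemma fiber_semigroup (q0 : (X -> Prop) -> Prop) :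
  refines F q0 -> uprod op q0 p = p -> semigroup_filter (fiber F p p).
Proof.
intros Hq0 Eq0. split.
- split; [exact (fiber_base F p p Hbase Hpu Hpu) |].
  intros Hempty.
  destruct (proj2 (refines_fiber F p p Hbase Hpu Hpu q0) (conj Hq0 Eq0)) as [Hq Hsub].
  exact (proj1 (proj2 Hq) (Hsub _ Hempty)).
- intros u v Hu Hv.
  destruct (proj1 (refines_fiber F p p Hbase Hpu Hpu u) Hu) as [HuF Eu].
  destruct (proj1 (refines_fiber F p p Hbase Hpu Hpu v) Hv) as [HvF Ev].
  apply (refines_fiber F p p Hbase Hpu Hpu). split; [apply (proj2 HF); auto |].
  now rewrite (uprod_assoc op u v p Hassoc), Ev, Eu.
Qed.

End MinimalSemigroup.

(* In a minimal closed subsemigroup cl F with p in it, minimality forces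
   (cl F) * p = cl F, so q0 * p = p for some q0, and then
   { q in cl F | q * p = p } = cl F, so p * p = p. *)
Theorem idempotent_in_semigroup_filter (F0 : (X -> Prop) -> Prop) :
  associative_op op -> semigroup_filter F0 ->
  exists p, refines F0 p /\ uprod op p p = p.
Proof.
intros Hassoc H0.
destruct (maximal_semigroup_filter F0 H0) as [F [HF [F0F Fmax]]].
destruct (ultrafilter_extension F (proj1 HF)) as [p Hp].
assert (Hmax : forall G, semigroup_filter G -> (forall S, F S -> G S) -> refines G p).
{ intros G HG FG. split; [apply Hp | intros S GS; apply Hp, (Fmax G HG FG), GS]. }
destruct (right_image_points F p HF Hp p) as [q0 [Hq0 Eq0]].
{ apply Hmax; [now apply right_image_semigroup | apply right_image_contains; auto]. }
assert (Hfib : refines (fiber F p p) p).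
{ apply Hmax; [now apply (fiber_semigroup F p HF Hp Hassoc q0) |].
  exact (fiber_contains F p p (proj1 Hp)). }
destruct (proj1 (refines_fiber F p p (proj1 (proj1 HF)) (proj1 Hp) (proj1 Hp) p) Hfib) as [_ Epp].
exists p. split; [split; [apply Hp | intros S HS; apply Hp, F0F, HS] | exact Epp].
Qed.
End Ellis.

Lemma idempotents_commute {X : Type} (op : X -> X -> X)
  (Hcomm : forall F G : (X -> Prop) -> Prop,
      beta_idempotent op F -> beta_idempotent op G -> beta_commute op F G)
  (p q : (X -> Prop) -> Prop) :
  is_ultrafilter p -> is_ultrafilter q -> uprod op p p = p -> uprod op q q = q ->
  uprod op p q = uprod op q p.
Proof.
intros Hp Hq Ep Eq.
assert (Hidem : forall u, is_ultrafilter u -> uprod op u u = u -> beta_idempotent op u).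
{ intros u Hu Eu. split; [exact Hu |]. intros S.
  rewrite (beta_op_uprod op u u S Hu Hu), Eu. tauto. }
apply functional_extensionality; intros S. apply propositional_extensionality.
rewrite <- (beta_op_uprod op p q S Hp Hq), <- (beta_op_uprod op q p S Hq Hp).
apply Hcomm; auto.
Qed.

Definition pow2_dvd (k e : nat) : Prop := exists c, e = 2 ^ k * c.

Definition val2_parity (i e : nat) : Prop :=
  exists m j, e = 2 ^ (2 * m + i) * (2 * j + 1).

Definition parity_exponents (k i e : nat) : Prop := pow2_dvd k e /\ val2_parity i e.

Lemma pow2_dvd_weaken (k K e : nat) : k <= K -> pow2_dvd K e -> pow2_dvd k e.
Proof.
intros kK [c ->]. exists (2 ^ (K - k) * c).
replace K with (k + (K - k)) at 1 by lia. rewrite Nat.pow_add_r. ring.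
Qed.

Lemma parity_exponents_nonempty (k i : nat) : parity_exponents k i (2 ^ (2 * k + i)).
Proof.
split.
- exists (2 ^ (k + i)). rewrite <- Nat.pow_add_r. f_equal. lia.
- exists k, 0. ring.
Qed.

Lemma parity_exponents_absorb (k i e : nat) : parity_exponents k i e ->
  exists K, forall e', pow2_dvd K e' -> parity_exponents k i (e + e').
Proof.
intros [[c Ec] [m [j Ej]]]. exists (k + (2 * m + i) + 1). intros e' [c' ->]. split.
- exists (c + 2 ^ (2 * m + i + 1) * c').
  rewrite Ec at 1. rewrite <- !Nat.add_assoc, Nat.pow_add_r. ring.
- exists m, (j + 2 ^ k * c'). rewrite Ej.
  rewrite !Nat.pow_add_r. simpl. ring.
Qed.

Lemma val2_unique (a b j l : nat) : 2 ^ a * (2 * j + 1) = 2 ^ b * (2 * l + 1) -> a = b.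
Proof.
revert b. induction a as [| a IH]; intros [| b] E; auto;
  rewrite ?Nat.pow_succ_r', ?Nat.pow_0_r, <- ?Nat.mul_assoc in E.
- remember (2 ^ b * (2 * l + 1)) as t. lia.
- remember (2 ^ a * (2 * j + 1)) as t. lia.
- f_equal. apply IH. lia.
Qed.

Lemma val2_parity_exclusive (e : nat) : val2_parity 0 e -> val2_parity 1 e -> False.
Proof.
intros [m [j E0]] [m' [j' E1]]. rewrite E0 in E1. apply val2_unique in E1. lia.
Qed.

Section Cyclic.
Context {X : Type} (op : X -> X -> X) (Hassoc : associative_op op).

Lemma npow_add (x : X) (a b : nat) :
  npow op x (a + b + 1) = op (npow op x a) (npow op x b).
Proof.
induction b as [| b IH].
- now rewrite Nat.add_0_r, Nat.add_1_r.
- replace (a + S b + 1) with (S (a + b + 1)) by lia. simpl. now rewrite IH, Hassoc.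
Qed.

Lemma npow_periodic (x : X) (i j : nat) : i < j -> npow op x i = npow op x j ->
  forall n, exists k, k < j /\ npow op x n = npow op x k.
Proof.
intros ij E.
assert (Hshift : forall k, npow op x (j + k) = npow op x (i + k)).
{ induction k as [| k IH]; [now rewrite !Nat.add_0_r |].
  rewrite !Nat.add_succ_r. simpl. now rewrite IH. }
intros n. induction n as [n IH] using (well_founded_induction lt_wf).
destruct (Nat.lt_ge_cases n j) as [nj | jn]; [now exists n |].
destruct (IH (i + (n - j))) as [k [kj Ek]]; [lia |].
exists k. split; [exact kj |]. rewrite <- Ek, <- Hshift. f_equal. lia.
Qed.

Lemma cyclic_finite_or_free (W : X -> Prop) (x : X) :
  (forall y, W y <-> exists n, y = npow op x n) ->
  finite_set W \/ forall n n', npow op x n = npow op x n' -> n = n'.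
Proof.
intros HW. destruct (classic (exists i j, i < j /\ npow op x i = npow op x j))
  as [[i [j [ij E]]] | Hfree].
- left. exists (map (npow op x) (seq 0 j)). intros y Wy.
  apply HW in Wy as [n ->]. destruct (npow_periodic x i j ij E n) as [k [kj ->]].
  apply in_map, in_seq. lia.
- right. intros n n' E. destruct (Nat.lt_total n n') as [h | [h | h]]; auto;
    exfalso; apply Hfree; eauto.
Qed.

Variable x : X.

Definition powers_with (Q : nat -> Prop) : X -> Prop :=
  fun y => exists n, y = npow op x n /\ Q (S n).

Definition parity_filter (i : nat) : (X -> Prop) -> Prop :=
  fun T => exists k, forall y, powers_with (parity_exponents k i) y -> T y.

Lemma parity_filter_divisible (i K : nat) (u : (X -> Prop) -> Prop) :
  refines (parity_filter i) u -> u (powers_with (pow2_dvd K)).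
Proof.
intros [_ Hu]. apply Hu. exists K. intros y [n [-> [HK _]]]. now exists n.
Qed.

Lemma parity_product (i k : nat) (u v : (X -> Prop) -> Prop) :
  refines (parity_filter i) u -> is_ultrafilter v ->
  (forall K, v (powers_with (pow2_dvd K))) ->
  uprod op u v (powers_with (parity_exponents k i)).
Proof.
intros [Hu HuF] Hv HvK. unfold uprod.
apply (uf_mono Hu _ _ (HuF _ (ex_intro _ k (fun y Hy => Hy)))).
intros a [n [-> Hn]]. destruct (parity_exponents_absorb k i (S n) Hn) as [K HK].
apply (uf_mono Hv _ _ (HvK K)). intros b [n' [-> Hn']].
exists (n + n' + 1). rewrite npow_add. split; [reflexivity |].
replace (S (n + n' + 1)) with (S n + S n') by lia. now apply HK.
Qed.

Lemma parity_filter_semigroup (i : nat) : semigroup_filter op (parity_filter i).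
Proof.
split; [split; [split; [| split] |] |].
- now exists 0.
- intros A B [k HA] AB. exists k; auto.
- intros A B [k1 HA] [k2 HB]. exists (k1 + k2). intros y [n [-> [Hdvd Hpar]]].
  split; [apply HA | apply HB]; exists n; (split; [reflexivity | split; [| exact Hpar]]);
    apply (pow2_dvd_weaken _ (k1 + k2)); auto; lia.
- intros [k Hk]. apply (Hk (npow op x (2 ^ (2 * k + i) - 1))).
  exists (2 ^ (2 * k + i) - 1). split; [reflexivity |].
  assert (Hpos : 0 < 2 ^ (2 * k + i)) by (apply Nat.neq_0_lt_0, Nat.pow_nonzero; lia).
  replace (S (2 ^ (2 * k + i) - 1)) with (2 ^ (2 * k + i)) by lia.
  apply parity_exponents_nonempty.
- intros u v Hu Hv. split; [apply uprod_ultra; [apply Hu | apply Hv] |].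
  intros T [k HT]. apply (uf_mono (uprod_ultra op u v (proj1 Hu) (proj1 Hv)) _ _
    (parity_product i k u v Hu (proj1 Hv) (fun K => parity_filter_divisible i K v Hv))).
  exact HT.
Qed.

Hypothesis Hcomm : forall F G : (X -> Prop) -> Prop,
  beta_idempotent op F -> beta_idempotent op G -> beta_commute op F G.

(* An element of infinite order yields idempotents p0, p1 with
   p0 * p1 on { x^e | v_2(e) even } and p1 * p0 on { x^e | v_2(e) odd }. *)
Lemma infinite_order_contradiction :
  (forall n n', npow op x n = npow op x n' -> n = n') -> False.
Proof.
intros Hfree.
destruct (idempotent_in_semigroup_filter op (parity_filter 0) Hassoc
            (parity_filter_semigroup 0)) as [p0 [Hp0 E0]].
destruct (idempotent_in_semigroup_filter op (parity_filter 1) Hassoc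
            (parity_filter_semigroup 1)) as [p1 [Hp1 E1]].
pose proof (parity_product 0 0 p0 p1 Hp0 (proj1 Hp1)
              (fun K => parity_filter_divisible 1 K p1 Hp1)) as Heven.
pose proof (parity_product 1 0 p1 p0 Hp1 (proj1 Hp0)
              (fun K => parity_filter_divisible 0 K p0 Hp0)) as Hodd.
rewrite (idempotents_commute op Hcomm p0 p1 (proj1 Hp0) (proj1 Hp1) E0 E1) in Heven.
pose proof (uprod_ultra op p1 p0 (proj1 Hp1) (proj1 Hp0)) as Hprod.
destruct (uf_witness Hprod _ (uf_and Hprod _ _ Heven Hodd))
  as [y [[n [-> [_ Hn]]] [n' [E [_ Hn']]]]].
apply Hfree in E. subst n'. exact (val2_parity_exclusive _ Hn Hn').
Qed.

End Cyclic.

Lemma dependent_choice {X : Type} (Q : X -> Prop) (R : X -> X -> Prop) (a0 : X) :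
  Q a0 -> (forall a, Q a -> exists b, Q b /\ R a b) ->
  exists f : nat -> X, forall n, Q (f n) /\ R (f n) (f (S n)).
Proof.
intros Q0 Hstep.
assert (Htotal : forall a, exists b, Q a -> Q b /\ R a b).
{ intros a. destruct (classic (Q a)) as [Qa | nQa].
  - destruct (Hstep a Qa) as [b Hb]. now exists b.
  - exists a. now intros. }
destruct (functional_choice _ Htotal) as [g Hg].
exists (fix f n := match n with O => a0 | S k => g (f k) end).
assert (HQ : forall n, Q ((fix f n := match n with O => a0 | S k => g (f k) end) n)).
{ induction n as [| n IH]; [exact Q0 | now apply Hg]. }
intros n. split; [apply HQ | now apply Hg].
Qed.

Section Linear.
Context {X : Type} (op : X -> X -> X) (Hassoc : associative_op op).

Definition chain (f : nat -> X) : Prop :=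
  (forall n m, n < m -> op (f n) (f m) = f n) \/
  (forall n m, n < m -> op (f n) (f m) = f m).

Lemma chain_of_consecutive (f : nat -> X) :
  (forall n, op (f n) (f (S n)) = f n) \/ (forall n, op (f n) (f (S n)) = f (S n)) ->
  chain f.
Proof.
intros [Hstep | Hstep]; [left | right]; intros n m nm;
  induction nm as [| m nm IH]; try apply Hstep.
- rewrite <- IH at 1. now rewrite <- Hassoc, Hstep.
- rewrite <- (Hstep m) at 1. now rewrite Hassoc, IH, Hstep.
Qed.

Lemma chain_injective (f : nat -> X) :
  chain f -> (forall n m, op (f n) (f m) = op (f m) (f n)) ->
  (forall n, f (S n) <> f n) -> forall n m, f n = f m -> n = m.
Proof.
intros Hchain Hcomm Hstep.
assert (Hlt : forall n m, n < m -> f n <> f m).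
{ intros n m nm E. apply (Hstep n).
  destruct (Nat.lt_total (S n) m) as [Snm | [<- | ?]]; [| now symmetry | lia].
  destruct Hchain as [Hc | Hc].
  - rewrite <- (Hc (S n) m Snm), <- E, Hcomm. apply Hc. lia.
  - rewrite <- (Hc n (S n) (Nat.lt_succ_diag_r n)), Hcomm, E. apply Hc, Snm. }
intros n m E. destruct (Nat.lt_total n m) as [h | [h | h]]; auto.
- now destruct (Hlt n m h).
- now destruct (Hlt m n h).
Qed.

Definition tail (f : nat -> X) (n : nat) : X -> Prop :=
  fun b => exists m, n < m /\ b = f m.

Definition tail_ultrafilter (f : nat -> X) (u : (X -> Prop) -> Prop) : Prop :=
  is_ultrafilter u /\ forall n, u (tail f n).

(* Ultrafilters living on the tails of a chain multiply like a left-zero or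
   a right-zero semigroup. *)
Lemma tail_product (f : nat -> X) : chain f ->
  (forall u v, tail_ultrafilter f u -> tail_ultrafilter f v -> uprod op u v = u) \/
  (forall u v, tail_ultrafilter f u -> tail_ultrafilter f v -> uprod op u v = v).
Proof.
intros [Hc | Hc]; [left | right]; intros u v [Hu Htu] [Hv Htv];
  apply uf_eq; auto using uprod_ultra; intros S HS.
- apply (uf_mono Hu _ _ (uf_and Hu _ _ HS (Htu 0))). intros a [Ha [n [_ ->]]].
  destruct (uf_witness Hv _ (uf_and Hv _ _ Ha (Htv n))) as [b [Hb [m [nm ->]]]].
  now rewrite Hc in Hb.
- destruct (uf_witness Hu _ (uf_and Hu _ _ HS (Htu 0))) as [a [Ha [n [_ ->]]]].
  apply (uf_mono Hv _ _ (uf_and Hv _ _ Ha (Htv n))). intros b [Hb [m [nm ->]]].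
  now rewrite Hc in Hb.
Qed.

Lemma tail_ultrafilter_on (f : nat -> X) (P : nat -> Prop) :
  (forall N, exists m, N <= m /\ P m) ->
  exists u, tail_ultrafilter f u /\ u (fun b => exists m, P m /\ b = f m).
Proof.
intros HP.
destruct (ultrafilter_extension
  (fun T => exists N, forall m, N <= m -> P m -> T (f m))) as [u [Hu Hsub]].
- split; [split; [| split] |].
  + now exists 0.
  + intros A B [N HA] AB. exists N; auto.
  + intros A B [N HA] [M HB]. exists (N + M). intros m hm Pm.
    split; [apply HA | apply HB]; auto; lia.
  + intros [N HN]. destruct (HP N) as [m [Nm Pm]]. exact (HN m Nm Pm).
- exists u. split; [split; [exact Hu |] |].
  + intros n. apply Hsub. exists (S n). intros m hm _. exists m. split; [lia | auto].
  + apply Hsub. exists 0. eauto.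
Qed.

Lemma cofinite_ultrafilter (W : X -> Prop) : ~ finite_set W ->
  exists p, is_ultrafilter p /\ p W /\ forall a, p (fun z => W z /\ z <> a).
Proof.
intros Hinf.
destruct (ultrafilter_extension
  (fun T => exists l : list X, forall z, W z -> ~ In z l -> T z)) as [p [Hp Hsub]].
- split; [split; [| split] |].
  + now exists nil.
  + intros A B [l HA] AB. exists l; auto.
  + intros A B [l1 HA] [l2 HB]. exists (l1 ++ l2). intros z Wz Hz.
    split; [apply HA | apply HB]; auto; intros Hin; apply Hz, in_or_app; auto.
  + intros [l Hl]. apply Hinf. exists l. intros z Wz. apply NNPP. exact (Hl z Wz).
- exists p. split; [exact Hp | split].
  + apply Hsub. now exists nil.
  + intros a. apply Hsub. exists (a :: nil). intros z Wz Hz.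
    split; [exact Wz | intros ->; apply Hz; now left].
Qed.

(* The
   side is decided by whether U = { a | a * b = a for p-most b } is in p. *)
Lemma linear_sequence (W : X -> Prop) : linear_set op W -> ~ finite_set W ->
  exists f : nat -> X, (forall n, W (f n) /\ f (S n) <> f n) /\
    ((forall n, op (f n) (f (S n)) = f n) \/ (forall n, op (f n) (f (S n)) = f (S n))).
Proof.
intros Hlin Hinf. destruct (cofinite_ultrafilter W Hinf) as [p [Hp [pW pA]]].
set (U := fun a => p (fun b => op a b = a)).
destruct (classic (p U)) as [pU | npU].
- destruct (uf_witness Hp _ (uf_and Hp _ _ pW pU)) as [a0 [Wa0 Ua0]].
  destruct (dependent_choice (fun a => W a /\ U a) (fun a b => b <> a /\ op a b = a) a0)
    as [f Hf]; [now split |  |].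
  + intros a [Wa Ua].
    destruct (uf_witness Hp _ (uf_and Hp _ _ (uf_and Hp _ _ (pA a) pU) Ua))
      as [b [[[Wb ba] Ub] Eab]].
    now exists b.
  + exists f. split; [intros n; split; apply Hf | left; intros n; apply Hf].
- apply (uf_compl Hp) in npU.
  destruct (uf_witness Hp _ (uf_and Hp _ _ pW npU)) as [a0 [Wa0 nUa0]].
  destruct (dependent_choice (fun a => W a /\ ~ U a) (fun a b => b <> a /\ op a b = b) a0)
    as [f Hf]; [now split |  |].
  + intros a [Wa nUa]. apply (uf_compl Hp) in nUa.
    destruct (uf_witness Hp _ (uf_and Hp _ _ (uf_and Hp _ _ (pA a) npU) nUa))
      as [b [[[Wb ba] nUb] Eab]].
    exists b. split; [now split | split; [exact ba |]].
    destruct (Hlin a b Wa Wb); tauto.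
  + exists f. split; [intros n; split; apply Hf | right; intros n; apply Hf].
Qed.

Hypothesis Hcomm : forall F G : (X -> Prop) -> Prop,
  beta_idempotent op F -> beta_idempotent op G -> beta_commute op F G.

(* An injective chain contradicts the commutation of idempotents: the tail
   ultrafilters u0, u1 on even and odd terms are idempotents, and
   u0 * u1 = u1 * u0 forces u0 = u1. *)
Lemma injective_chain_contradiction (f : nat -> X) :
  chain f -> (forall n m, f n = f m -> n = m) -> False.
Proof.
intros Hchain Hinj.
destruct (tail_ultrafilter_on f (fun m => exists k, m = 2 * k)) as [u0 [Hu0 Heven]].
{ intros N. exists (2 * N). split; [lia | eauto]. }
destruct (tail_ultrafilter_on f (fun m => exists k, m = 2 * k + 1)) as [u1 [Hu1 Hodd]].
{ intros N. exists (2 * N + 1). split; [lia | eauto]. }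
assert (Hidem : forall u, tail_ultrafilter f u -> uprod op u u = u)
  by (intros u Hu; destruct (tail_product f Hchain) as [Hp | Hp]; auto).
pose proof (idempotents_commute op Hcomm u0 u1 (proj1 Hu0) (proj1 Hu1)
              (Hidem u0 Hu0) (Hidem u1 Hu1)) as E.
assert (E01 : u0 = u1).
{ destruct (tail_product f Hchain) as [Hp | Hp].
  - now rewrite <- (Hp u0 u1 Hu0 Hu1), E, (Hp u1 u0 Hu1 Hu0).
  - now rewrite <- (Hp u1 u0 Hu1 Hu0), <- E, (Hp u0 u1 Hu0 Hu1). }
subst u1.
destruct (uf_witness (proj1 Hu0) _ (uf_and (proj1 Hu0) _ _ Heven Hodd))
  as [b [[m [[k ->] ->]] [m' [[k' ->] E']]]].
apply Hinj in E'. lia.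
Qed.

(* In a linear set, elements are idempotent, so the principal ultrafilters
   they generate commute. *)
Lemma linear_commutative (W : X -> Prop) : linear_set op W ->
  forall a b, W a -> W b -> op a b = op b a.
Proof.
intros Hlin a b Wa Wb.
assert (Hidem : forall c, W c -> uprod op (principal c) (principal c) = principal c).
{ intros c Wc. rewrite uprod_principal. destruct (Hlin c c Wc Wc) as [-> | ->]; auto. }
pose proof (idempotents_commute op Hcomm _ _ (principal_ultra a) (principal_ultra b)
              (Hidem a Wa) (Hidem b Wb)) as E.
rewrite !uprod_principal in E.
pose proof (f_equal (fun u => u (fun z => z = op b a)) E) as Eab.
unfold principal in Eab. now rewrite Eab.
Qed.

(* A linear set is finite: otherwise it contains an injective chain. *)
Lemma linear_set_finite (W : X -> Prop) : linear_set op W -> finite_set W.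
Proof.
intros Hlin. apply NNPP. intros Hinf.
destruct (linear_sequence W Hlin Hinf) as [f [Hf Hcons]].
pose proof (chain_of_consecutive f Hcons) as Hchain.
apply (injective_chain_contradiction f Hchain), (chain_injective f Hchain).
- intros n m. apply (linear_commutative W Hlin); apply Hf.
- intros n. apply Hf.
Qed.

End Linear.

Theorem proposition2p1 (X : Type) (op : X -> X -> X)
  (Hassoc : associative_op op)
  (Hcomm : forall F G : (X -> Prop) -> Prop,
      beta_idempotent op F -> beta_idempotent op G -> beta_commute op F G) :
  (forall S : X -> Prop, subsemigroup op S -> cyclic_set op S -> finite_set S) /\
  (forall S : X -> Prop, subsemigroup op S -> linear_set op S -> finite_set S).
Proof.
split.
- intros S _ [x [_ HS]].
  destruct (cyclic_finite_or_free op S x HS) as [Hfin | Hfree]; [exact Hfin |].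
  exfalso. exact (infinite_order_contradiction op Hassoc x Hcomm Hfree).
- intros S _ Hlin. exact (linear_set_finite op Hassoc Hcomm S Hlin).
Qed.
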